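(* For every composition $\alpha$, the coproduct of $\mathrm{QSym}$ satisfies $\Delta(S_\alpha)=\sum_{\beta\gamma=\alpha}S_\beta\otimes S_\gamma$, where the sum is over all ways of writing $\alpha$ as a concatenation $\beta\gamma$ of two (possibly empty) compositions.
   Context: A composition $\alpha=(\alpha_1,\dots,\alpha_\ell)$ of $n$ is a finite sequence of positive integers summing to $n$; the concatenation of $\beta$ and $\gamma$ is $\beta\gamma$; the empty composition $()$ has $M_{()}=S_{()}=1$. Set $\mathcal{I}(\alpha)=\{\alpha_1,\alpha_1+\alpha_2,\dots,\alpha_1+\cdots+\alpha_{\ell-1}\}$, and write $\beta\le\alpha$ if $\mathcal{I}(\beta)\subseteq\mathcal{I}(\alpha)$. $M_\alpha=\sum_{i_1<\cdots<i_\ell}x_{i_1}^{\alpha_1}\cdots x_{i_\ell}^{\alpha_\ell}$. $\mathrm{QSym}$ is the Hopf algebra spanned by the $M_\alpha$ with coproduct $\Delta(M_\alpha)=\sum_{\beta\gamma=\alpha}M_\beta\otimes M_\gamma$. Shuffle functions: for $\alpha=(\alpha_1,\dots,\alpha_\ell)$ let $\mathrm{OtE}(\alpha)=\{i:\alpha_i\text{ odd},\ \alpha_{i+1}\text{ even}\}=\{i_1<\cdots<i_k\}$ and $m_o(\alpha)=(\alpha_1+\cdots+\alpha_{i_1},\ \alpha_{i_1+1}+\cdots+\alpha_{i_2},\ \dots,\ \alpha_{i_k+1}+\cdots+\alpha_\ell)$. For $m_o(\alpha)\le\beta\le\alpha$, each part $\beta_i$ is a sum of a block of consecutive parts of $\alpha$;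 with $\mathrm{O}(i),\mathrm{E}(i)$ the numbers of odd and even parts of that block put $c_\alpha^\beta=\prod_i\frac{1}{\mathrm{O}(i)!\mathrm{E}(i)!}$. Then $S_\alpha=\sum_{m_o(\alpha)\le\beta\le\alpha}c_\alpha^\beta M_\beta$. *)

(* QSym is modelled through its monomial basis: an element
   F of QSym is represented by its coefficient function  beta |-> [M_beta]F,
   and an element of QSym (x) QSym by its coefficient function
   (delta, eps) |-> [M_delta (x) M_eps]. *)
From mathcomp Require Import all_boot all_order all_algebra.
Set Implicit Arguments. Unset Strict Implicit. Unset Printing Implicit Defensive.
Import GRing.Theory Num.Theory.
Local Open Scope ring_scope.

Definition is_comp (a : seq nat) : bool := all (fun x => 0 < x)%N a.

Definition Iset (a : seq nat) : seq nat :=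
  [seq sumn (take k a) | k <- iota 1 (size a).-1].

Definition comp_le (b a : seq nat) : bool :=
  [&& is_comp b, is_comp a, sumn b == sumn a & all (fun x => x \in Iset a) (Iset b)].

(* split a sequence into consecutive blocks, cutting after each position whose
   partial sum lies in I *)
Fixpoint cutI (I : seq nat) (acc : nat) (cur : seq nat) (s : seq nat)
  : seq (seq nat) :=
  match s with
  | [::] => [:: cur]
  | x :: s' =>
      if ((acc + x)%N \in I) && (s' != [::])
      then rcons cur x :: cutI I (acc + x) [::] s'
      else cutI I (acc + x) (rcons cur x) s'
  end.

Definition blocks (a : seq nat) (I : seq nat) : seq (seq nat) :=
  if a is [::] then [::] else cutI I 0 [::] a.

Definition OtE (a : seq nat) : seq nat :=
  [seq i <- iota 1 (size a).-1 | odd (nth 0%N a i.-1) && ~~ odd (nth 0%N a i)].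

Definition m_o (a : seq nat) : seq nat :=
  map sumn (blocks a [seq sumn (take i a) | i <- OtE a]).

Definition c_coef (a b : seq nat) : rat :=
  \prod_(bl <- blocks a (Iset b))
     (((count odd bl)`! * (count (fun x => ~~ odd x) bl)`!)%:R)^-1.

Definition S_fun (a : seq nat) : seq nat -> rat :=
  fun b => if comp_le (m_o a) b && comp_le b a then c_coef a b else 0.

(* coproduct: Delta(sum_beta F(beta) M_beta) = sum_beta F(beta) sum_{delta eps = beta} M_delta (x) M_eps *)
Definition Delta (F : seq nat -> rat) : seq nat -> seq nat -> rat :=
  fun d e => F (d ++ e).

Definition tensor (F G : seq nat -> rat) : seq nat -> seq nat -> rat :=
  fun d e => F d * G e.

(* A composition b <= a amounts to a way of cutting a into consecutive nonempty
   blocks with block sums b, and this blocking is unique, because a composition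
   is determined by its sum and its set of partial sums. The condition
   m_o(a) <= b says that every odd part of a followed by an even part ends a
   block, so S_a(b) is the product over the blocks of a weight depending only on
   the block: 0 if it contains an odd part followed by an even one, 1/(O! E!)
   otherwise. Cutting a blocking of a with block sums d ++ e after its first
   (size d) blocks gives blockings of a prefix take k a and of drop k a with
   block sums d and e, and every such pair glues back to it. As the weight is
   multiplicative, in the sum over k only the term at this cut position k
   survives, and it equals S_a(d ++ e). *)

From mathcomp Require Import all_boot all_order all_algebra zify.
Set Implicit Arguments. Unset Strict Implicit. Unset Printing Implicit Defensive.

(** * Partial sums *)

Definition psum (s : seq nat) (k : nat) : nat := sumn (take k s).

Lemma psum0 s : psum s 0 = 0.
Proof. by rewrite /psum take0. Qed.

Lemma psumS x s k : psum (x :: s) k.+1 = x + psum s k.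
Proof. by []. Qed.

Lemma is_comp_cat s t : is_comp (s ++ t) = is_comp s && is_comp t.
Proof. exact: all_cat. Qed.

Lemma is_comp_take k a : is_comp a -> is_comp (take k a).
Proof. by rewrite -{1}(cat_take_drop k a) is_comp_cat => /andP[]. Qed.

Lemma is_comp_drop k a : is_comp a -> is_comp (drop k a).
Proof. by rewrite -{1}(cat_take_drop k a) is_comp_cat => /andP[]. Qed.

Lemma ltn_psum a i j : is_comp a -> i < j -> j <= size a -> psum a i < psum a j.
Proof.
move=> ha lt_ij le_j; rewrite /psum -(subnKC (ltnW lt_ij)) takeD sumn_cat.
rewrite -[ltnLHS]addn0 ltn_add2l.
have : is_comp (drop i a) by exact: is_comp_drop.
have : 0 < size (drop i a) by rewrite size_drop; lia.
case: (drop i a) => [|x r] //= _ /andP[x_gt0 _].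
by rewrite -(prednK (_ : 0 < j - i)) ?subn_gt0 //= ltn_addr.
Qed.

Lemma psum_inj a i j :
  is_comp a -> i <= size a -> j <= size a -> psum a i = psum a j -> i = j.
Proof.
move=> ha le_i le_j eq_ij; case: (ltngtP i j) => // [lt_ij|lt_ji].
  by have := ltn_psum ha lt_ij le_j; rewrite eq_ij ltnn.
by have := ltn_psum ha lt_ji le_i; rewrite eq_ij ltnn.
Qed.

Lemma mem_map_addn c L v : (v \in map (addn c) L) = (c <= v) && (v - c \in L).
Proof.
apply/mapP/andP => [[u u_in ->]|[le_cv v_in]]; first by rewrite leq_addr addKn.
by exists (v - c); rewrite ?subnKC.
Qed.

Lemma mem_Iset a v : (v \in Iset a) = has (fun k => v == psum a k) (iota 1 (size a).-1).
Proof. by apply/mapP/hasP => [[k k_in ->]|[k k_in /eqP ->]]; exists k. Qed.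

Lemma Iset_bounds a v : is_comp a -> v \in Iset a -> 0 < v < sumn a.
Proof.
move=> ha; rewrite mem_Iset => /hasP[k]; rewrite mem_iota => k_in /eqP ->.
have := ltn_psum ha (i := 0) (j := k); have := ltn_psum ha (i := k) (j := size a).
rewrite /psum take0 take_size /= => lt_k lt0; rewrite lt0 ?lt_k //; lia.
Qed.

Lemma Iset_cons x r :
  Iset (x :: r) = if r is [::] then [::] else x :: map (addn x) (Iset r).
Proof.
case: r => [|y r] //; rewrite /Iset /= addn0 (iotaDl 1 1) -!map_comp.
by congr (_ :: _); apply: eq_map.
Qed.

Lemma mem_Iset_cons x r v : r != [::] ->
  (v \in Iset (x :: r)) = (v == x) || (x <= v) && (v - x \in Iset r).
Proof. by case: r => // y r _; rewrite Iset_cons in_cons mem_map_addn. Qed.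

Lemma Iset_cons_ge x r v : v \in Iset (x :: r) -> x <= v.
Proof.
case: r => [|y r]; first by rewrite Iset_cons.
by rewrite mem_Iset_cons // => /orP[/eqP ->|/andP[]].
Qed.

Lemma Iset_inj a b : is_comp a -> is_comp b -> sumn a = sumn b -> Iset a =i Iset b -> a = b.
Proof.
elim: a b => [|x a IH] [|y b] //=; rewrite /is_comp /=.
- by move=> _ /andP[]; lia.
- by move=> /andP[]; lia.
move=> /andP[x_gt0 ha] /andP[y_gt0 hb].
have [->|a_nil] := eqVneq a [::]; have [->|b_nil] := eqVneq b [::] => eq_sum eq_I.
- by move: eq_sum => /=; rewrite !addn0 => ->.
- by have := eq_I y; rewrite (mem_Iset_cons y) // eqxx Iset_cons.
- by have := eq_I x; rewrite (mem_Iset_cons x) // eqxx Iset_cons.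
have x_in : x \in Iset (y :: b) by rewrite -eq_I mem_Iset_cons // eqxx.
have y_in : y \in Iset (x :: a) by rewrite eq_I mem_Iset_cons // eqxx.
have eq_xy : x = y by apply/eqP; rewrite eqn_leq (Iset_cons_ge x_in) (Iset_cons_ge y_in).
subst y; congr (_ :: _); apply: IH => //; first lia.
have Iset0 s : is_comp s -> 0 \notin Iset s by move=> hs; apply/negP => /(Iset_bounds hs).
move=> v; have := eq_I (x + v); rewrite !mem_Iset_cons // leq_addr addKn.
have [->|v_gt0] := posnP v; first by rewrite (negbTE (Iset0 _ ha)) (negbTE (Iset0 _ hb)).
by rewrite -{2 4}[x]addn0 eqn_add2l eqn0Ngt v_gt0.
Qed.

(** * Blockings *)

Lemma flatten_cutI I acc cur s : flatten (cutI I acc cur s) = cur ++ s.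
Proof.
elim: s acc cur => [|x s IH] acc cur /=; first by rewrite cats0.
by case: ifP => _ /=; rewrite IH cat_rcons.
Qed.

Lemma cutI_neq0 I acc cur s : cutI I acc cur s != [::].
Proof. by elim: s acc cur => [|x s IH] acc cur //=; case: ifP. Qed.

Lemma cutI_nonempty I acc cur s : (cur != [::]) || (s != [::]) ->
  all (fun bl => bl != [::]) (cutI I acc cur s).
Proof.
elim: s acc cur => [|x s IH] acc cur /=; first by rewrite orbF andbT.
move=> _; case: ifP => [/andP[_ s_neq0]|_] /=.
  by rewrite -size_eq0 size_rcons IH // s_neq0 orbT.
by rewrite IH // -size_eq0 size_rcons.
Qed.

Lemma mem_Iset_cutI I acc cur s v :
  (v \in Iset (shape (cutI I acc cur s))) =
  [&& size cur < v, v < size cur + size s & acc + psum s (v - size cur) \in I].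
Proof.
elim: s acc cur v => [|x s IH] acc cur v /=.
  by rewrite addn0; apply/esym/and3P => -[]; lia.
have [-> /=|s_neq0] := eqVneq s [::].
  by rewrite andbF; apply/esym/and3P => -[]; lia.
have s_gt0 : 0 < size s by rewrite lt0n size_eq0.
rewrite andbT; case: ifP => [x_cut|x_nocut].
  rewrite /= mem_Iset_cons; last by rewrite -size_eq0 size_map size_eq0 cutI_neq0.
  rewrite IH /= subn0 add0n size_rcons.
  have [lt_v|gt_v|->] := ltngtP v (size cur).+1 => //.
    have -> : v - size cur = (v - (size cur).+1).+1 by lia.
    by rewrite subn_gt0 gt_v psumS addnA; congr (_ && _); lia.
  by rewrite subSnn psumS psum0 addn0 x_cut andbT; lia.
rewrite IH size_rcons.
have [lt_v|gt_v|->] := ltngtP v (size cur).+1 => //.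
  have -> : v - size cur = (v - (size cur).+1).+1 by lia.
  by rewrite psumS addnA /=; congr (_ && _); lia.
by rewrite subSnn psumS psum0 addn0 x_nocut andbF.
Qed.

Lemma flatten_blocks a I : flatten (blocks a I) = a.
Proof. by case: a => // x a; rewrite /blocks flatten_cutI. Qed.

Lemma blocks_nonempty a I : all (fun bl => bl != [::]) (blocks a I).
Proof. by case: a => // x a; apply: cutI_nonempty. Qed.

Lemma mem_Iset_blocks a I v :
  (v \in Iset (shape (blocks a I))) = [&& 0 < v, v < size a & psum a v \in I].
Proof.
case: a => [|x a]; first by case: v.
by rewrite /blocks mem_Iset_cutI subn0.
Qed.

Lemma Iset_map_sumn ss : Iset (map sumn ss) = map (psum (flatten ss)) (Iset (shape ss)).
Proof.
rewrite /Iset !size_map -map_comp; apply: eq_map => k /=.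
rewrite -map_take -sumn_flatten /psum -map_take -size_flatten.
by rewrite -[X in take _ (flatten X)](cat_take_drop k ss) flatten_cat take_size_cat.
Qed.

Definition is_blocking (a b : seq nat) (ss : seq (seq nat)) : bool :=
  [&& all (fun bl => bl != [::]) ss, flatten ss == a & map sumn ss == b].

Lemma is_comp_shape (ss : seq (seq nat)) :
  all (fun bl => bl != [::]) ss -> is_comp (shape ss).
Proof. by rewrite /is_comp all_map; apply: sub_all => bl /=; rewrite lt0n size_eq0. Qed.

Lemma blocking_comp a b ss : is_comp a -> is_blocking a b ss -> is_comp b.
Proof.
move=> ha /and3P[ss_ne /eqP eq_a /eqP <-]; move: ha ss_ne; rewrite -eq_a {eq_a}.
elim: ss => [|bl ss IH] //=.
rewrite is_comp_cat => /andP[hbl hss] /andP[bl_neq0 ss_neq0].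
apply/andP; split; last exact: IH.
by case: bl bl_neq0 hbl => [|x bl] //= _ /andP[x_gt0 _]; rewrite ltn_addr.
Qed.

Lemma eq_prefix_sumn u r u' r' :
  is_comp (u ++ r) -> u ++ r = u' ++ r' -> sumn u = sumn u' -> u = u'.
Proof.
elim: u u' => [|x u IH] [|x' u'] //=.
- by move=> + eq_ur; rewrite eq_ur /is_comp /= => /andP[]; lia.
- by move=> /andP[]; lia.
by move=> /andP[_ hur] [<- eq_ur] eq_sum; rewrite (IH u') //; lia.
Qed.

Lemma blocking_uniq a b ss tt :
  is_comp a -> is_blocking a b ss -> is_blocking a b tt -> ss = tt.
Proof.
elim: ss a b tt => [|bl ss IH] a b [|bl' tt] //=.
- by move=> _ /and3P[_ _ /eqP <-] /and3P[].
- by move=> _ /and3P[_ _ /eqP <-] /and3P[].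
move=> ha /and3P[/andP[_ ss_ne] /eqP eq_a /eqP eq_b].
move=> /and3P[/andP[_ tt_ne] /eqP eq_a' /eqP eq_b'].
rewrite /= in eq_a eq_a'.
have eq_bl : bl = bl'.
  apply: (eq_prefix_sumn (r := flatten ss) (r' := flatten tt)); rewrite ?eq_a ?eq_a' //.
  by move: eq_b'; rewrite -eq_b => -[].
subst bl'; have eq_flat : flatten ss = flatten tt.
  by move/(congr1 (drop (size bl))): (etrans eq_a (esym eq_a')); rewrite !drop_size_cat.
congr (_ :: _); apply: (IH (flatten ss) (map sumn ss)).
- by move: ha; rewrite -eq_a is_comp_cat => /andP[].
- by apply/and3P.
- by move: eq_b'; rewrite -eq_b eq_flat => -[eq_sums]; apply/and3P; rewrite eq_sums.
Qed.

Lemma blocking_comp_le a b ss : is_comp a -> is_blocking a b ss -> comp_le b a.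
Proof.
move=> ha hss; have hb := blocking_comp ha hss.
case/and3P: hss => ss_ne /eqP eq_a /eqP eq_b.
rewrite /comp_le hb ha -eq_b -sumn_flatten eq_a eqxx /=.
rewrite Iset_map_sumn eq_a all_map; apply/allP => v v_in /=.
have := Iset_bounds (is_comp_shape ss_ne) v_in; rewrite -size_flatten eq_a => /andP[v_gt0 v_lt].
by rewrite mem_Iset; apply/hasP; exists v; rewrite // mem_iota; lia.
Qed.

Lemma comp_le_blocking a b : is_comp a -> comp_le b a -> is_blocking a b (blocks a (Iset b)).
Proof.
move=> ha /and4P[hb _ /eqP eq_sum /allP sub_I].
set ss := blocks a (Iset b).
have ss_blocking : is_blocking a (map sumn ss) ss.
  by rewrite /is_blocking blocks_nonempty flatten_blocks !eqxx.
rewrite /is_blocking blocks_nonempty flatten_blocks eqxx /=; apply/eqP/Iset_inj => //.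
- exact: blocking_comp ss_blocking.
- by rewrite -sumn_flatten flatten_blocks eq_sum.
move=> v; rewrite Iset_map_sumn flatten_blocks.
apply/mapP/idP => [[j]|v_in]; first by rewrite mem_Iset_blocks => /and3P[_ _ ?] ->.
have := sub_I v v_in; rewrite mem_Iset => /hasP[j]; rewrite mem_iota => j_in /eqP eq_v.
by exists j; rewrite // mem_Iset_blocks -eq_v v_in andbT; lia.
Qed.

Lemma blocks_blocking a b ss : is_comp a -> is_blocking a b ss -> blocks a (Iset b) = ss.
Proof.
move=> ha hss; apply: (blocking_uniq ha _ hss).
exact/comp_le_blocking/(blocking_comp_le ha hss).
Qed.

(** * Odd parts followed by even parts *)

Lemma mem_OtE a i :
  (i \in OtE a) = [&& 0 < i, i < size a, odd (nth 0 a i.-1) & ~~ odd (nth 0 a i)].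
Proof.
rewrite /OtE mem_filter mem_iota andbC; case: i => [|i] //=.
by congr (_ && _); lia.
Qed.

Lemma OtE_bounds a i : i \in OtE a -> 0 < i < size a.
Proof. by rewrite mem_OtE => /and4P[-> -> _ _]. Qed.

Lemma mem_OtE_catl s t i : i < size s -> (i \in OtE (s ++ t)) = (i \in OtE s).
Proof.
move=> lt_i; rewrite !mem_OtE size_cat !nth_cat lt_i (leq_ltn_trans (leq_pred i) lt_i).
by case: (posnP i) => // _; rewrite ltn_addr.
Qed.

Lemma mem_OtE_catr s t i : size s < i -> (i \in OtE (s ++ t)) = (i - size s \in OtE t).
Proof.
move=> lt_i; rewrite !mem_OtE size_cat !nth_cat.
have -> : (i < size s) = false by lia.
have -> : (i.-1 < size s) = false by lia.
have -> : i.-1 - size s = (i - size s).-1 by lia.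
rewrite subn_gt0 lt_i (leq_ltn_trans (leq0n _) lt_i) /=; congr (_ && _); lia.
Qed.

Lemma OtE_flatten (ss : seq (seq nat)) : all (fun bl => bl != [::]) ss ->
  all (fun i => i \in Iset (shape ss)) (OtE (flatten ss)) = all (fun bl => OtE bl == [::]) ss.
Proof.
elim: ss => [|bl ss IH] //= /andP[bl_ne ss_ne]; rewrite -IH //.
have [-> /=|ss_neq0] := eqVneq ss [::].
  by rewrite cats0 andbT Iset_cons; case: (OtE bl).
have mem_cuts v : (v \in Iset (size bl :: shape ss)) =
    (v == size bl) || (size bl <= v) && (v - size bl \in Iset (shape ss)).
  by rewrite mem_Iset_cons // -size_eq0 size_map size_eq0.
apply/allP/andP => [cut_OtE|[/eqP OtE_bl /allP cut_OtE] i].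
  split.
    apply/eqP; case E: (OtE bl) => [|i l] //.
    have /OtE_bounds/andP[_ lt_i] : i \in OtE bl by rewrite E mem_head.
    have : i \in OtE (bl ++ flatten ss) by rewrite mem_OtE_catl // E mem_head.
    by move/cut_OtE/Iset_cons_ge; rewrite leqNgt lt_i.
  apply/allP => i i_in; have /OtE_bounds/andP[i_gt0 _] := i_in.
  have : size bl + i \in OtE (bl ++ flatten ss).
    by rewrite mem_OtE_catr ?addKn // -addn1 leq_add2l.
  by move/cut_OtE; rewrite mem_cuts addKn leq_addr -{2}[size bl]addn0 eqn_add2l eqn0Ngt i_gt0.
rewrite mem_cuts; have [lt_i|gt_i|->] := ltngtP i (size bl) => //.
  by rewrite mem_OtE_catl // OtE_bl.
by rewrite mem_OtE_catr // => /cut_OtE.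
Qed.

Lemma mem_map_psum a L j : is_comp a -> j <= size a -> all (fun k => k <= size a) L ->
  (psum a j \in map (psum a) L) = (j \in L).
Proof.
move=> ha le_j /allP le_L; apply/mapP/idP => [[k k_in eq_jk]|]; last by exists j.
by rewrite (psum_inj ha le_j (le_L k k_in) eq_jk).
Qed.

Lemma Iset_shape_le (ss : seq (seq nat)) : all (fun bl => bl != [::]) ss ->
  all (fun k => k <= size (flatten ss)) (Iset (shape ss)).
Proof.
move=> ss_ne; apply/allP => k /(Iset_bounds (is_comp_shape ss_ne)).
by rewrite -size_flatten => /andP[_ /ltnW].
Qed.

Lemma Iset_m_o a : is_comp a -> Iset (m_o a) =i map (psum a) (OtE a).
Proof.
move=> ha; rewrite /m_o Iset_map_sumn flatten_blocks; apply: eq_mem_map => j.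
rewrite mem_Iset_blocks.
have [j_in|j_nin] := boolP (j \in OtE a).
  by rewrite andbA (OtE_bounds j_in) (map_f (psum a) j_in).
apply/negbTE/and3P => -[j_gt0 j_lt].
rewrite (mem_map_psum ha (ltnW j_lt)) ?(negbTE j_nin) //.
by apply/allP => k /OtE_bounds/andP[_ /ltnW].
Qed.

Lemma comp_le_m_o a b ss : is_comp a -> is_blocking a b ss ->
  comp_le (m_o a) b = all (fun bl => OtE bl == [::]) ss.
Proof.
move=> ha hss; have hb := blocking_comp ha hss.
have mo_blocking : is_blocking a (m_o a) (blocks a [seq psum a i | i <- OtE a]).
  by rewrite /is_blocking blocks_nonempty flatten_blocks !eqxx.
case/and3P: hss => ss_ne /eqP eq_a /eqP eq_b.
rewrite /comp_le (blocking_comp ha mo_blocking) hb /=.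
rewrite {1}/m_o -!sumn_flatten flatten_blocks -eq_b -sumn_flatten eq_a eqxx /=.
rewrite (eq_all_r (Iset_m_o ha)) all_map Iset_map_sumn -(OtE_flatten ss_ne) eq_a.
apply: eq_in_all => j /OtE_bounds/andP[_ j_lt] /=; apply: mem_map_psum (ltnW j_lt) _ => //.
by rewrite -eq_a Iset_shape_le.
Qed.

(** * Shuffle functions *)

Import GRing.Theory.
Local Open Scope ring_scope.

Definition block_weight (bl : seq nat) : rat :=
  if OtE bl == [::] then ((count odd bl)`! * (count (fun x => ~~ odd x) bl)`!)%:R^-1 else 0.

Lemma S_fun_blocking a b ss :
  is_comp a -> is_blocking a b ss -> S_fun a b = \prod_(bl <- ss) block_weight bl.
Proof.
move=> ha hss; rewrite /S_fun (comp_le_m_o ha hss) (blocking_comp_le ha hss) andbT.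
rewrite /c_coef (blocks_blocking ha hss); elim: ss {hss} => [|bl ss IH] /=.
  by rewrite !big_nil.
rewrite !big_cons /block_weight; case: eqP => _ /=; last by rewrite mul0r.
by rewrite -IH; case: all; rewrite ?mulr0.
Qed.

Lemma S_fun_neq0_blocking a b :
  is_comp a -> S_fun a b != 0 -> is_blocking a b (blocks a (Iset b)).
Proof. by move=> ha; rewrite /S_fun; case: ifP => // /andP[_ /(comp_le_blocking ha)]. Qed.

Lemma blocking_cat a1 a2 d e ss1 ss2 : is_blocking a1 d ss1 -> is_blocking a2 e ss2 ->
  is_blocking (a1 ++ a2) (d ++ e) (ss1 ++ ss2).
Proof.
move=> /and3P[ne1 /eqP <- /eqP <-] /and3P[ne2 /eqP <- /eqP <-].
by rewrite /is_blocking all_cat ne1 ne2 flatten_cat map_cat !eqxx.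
Qed.

Lemma blocking_split a d e ss : is_blocking a (d ++ e) ss ->
  let k := size (flatten (take (size d) ss)) in
  is_blocking (take k a) d (take (size d) ss) /\ is_blocking (drop k a) e (drop (size d) ss).
Proof.
case/and3P=> ss_ne /eqP <- /eqP eq_sums k.
move: ss_ne; rewrite -[in all _ ss](cat_take_drop (size d) ss) all_cat => /andP[ne1 ne2].
rewrite -[in take k _](cat_take_drop (size d) ss) -[in drop k _](cat_take_drop (size d) ss).
rewrite flatten_cat take_size_cat // drop_size_cat //.
by rewrite /is_blocking ne1 ne2 map_take map_drop eq_sums take_size_cat // drop_size_cat // !eqxx.
Qed.

Lemma S_fun_cat a1 a2 d e ss1 ss2 : is_comp (a1 ++ a2) ->
  is_blocking a1 d ss1 -> is_blocking a2 e ss2 ->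
  S_fun (a1 ++ a2) (d ++ e) = S_fun a1 d * S_fun a2 e.
Proof.
rewrite is_comp_cat => /andP[ha1 ha2] h1 h2.
rewrite (S_fun_blocking _ (blocking_cat h1 h2)) ?is_comp_cat ?ha1 //.
by rewrite (S_fun_blocking ha1 h1) (S_fun_blocking ha2 h2) big_cat.
Qed.

(* Junk when [a] has no blocking with block sums [d ++ e]; then S_a(d ++ e) = 0. *)
Definition cut_index (a d e : seq nat) : nat :=
  size (flatten (take (size d) (blocks a (Iset (d ++ e))))).

Lemma cut_index_le a d e : (cut_index a d e <= size a)%N.
Proof.
rewrite /cut_index -[leqRHS](congr1 size (flatten_blocks a (Iset (d ++ e)))).
by rewrite -[in leqRHS](cat_take_drop (size d) (blocks _ _)) flatten_cat size_cat leq_addr.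
Qed.

Lemma S_fun_take_drop a d e k : is_comp a -> (k <= size a)%N ->
  S_fun (take k a) d * S_fun (drop k a) e =
  if k == cut_index a d e then S_fun a (d ++ e) else 0.
Proof.
move=> ha le_k; set lhs := S_fun (take k a) d * S_fun (drop k a) e.
have split_blocking : lhs != 0 ->
    is_blocking (take k a) d (blocks (take k a) (Iset d)) /\
    is_blocking (drop k a) e (blocks (drop k a) (Iset e)).
  rewrite mulf_eq0 negb_or => /andP[].
  move=> /(S_fun_neq0_blocking (is_comp_take _ ha)) h1.
  by move=> /(S_fun_neq0_blocking (is_comp_drop _ ha)) h2.
have [S0|/(S_fun_neq0_blocking ha) hss] := eqVneq (S_fun a (d ++ e)) 0.
  rewrite S0 if_same; have [//|/split_blocking[h1 h2]] := eqVneq lhs 0.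
  by rewrite /lhs -(S_fun_cat _ h1 h2) ?cat_take_drop // S0 eqxx.
have [h1 h2] := blocking_split hss.
rewrite /cut_index; case: eqP => [eq_k|ne_k].
  by rewrite /lhs eq_k -(S_fun_cat _ h1 h2) cat_take_drop.
have [//|/split_blocking[t1 t2]] := eqVneq lhs 0; case: ne_k.
have := blocking_cat t1 t2; rewrite cat_take_drop => /(blocking_uniq ha hss) ->.
case/and3P: t1 => _ /eqP flat1 /eqP sums1.
by rewrite -{1}sums1 size_map take_size_cat // flat1 size_takel.
Qed.

Theorem mainTheorem3 (alpha : seq nat) (Halpha : is_comp alpha) (d e : seq nat) :
  Delta (S_fun alpha) d e =
  \sum_(k < (size alpha).+1)
     tensor (S_fun (take k alpha)) (S_fun (drop k alpha)) d e.
Proof.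
have cut_le : (cut_index alpha d e < (size alpha).+1)%N by rewrite ltnS cut_index_le.
rewrite /Delta /tensor.
under eq_bigr => k _ do rewrite (S_fun_take_drop d e Halpha (ltn_ord k)).
rewrite -big_mkcond /= (big_pred1 (Ordinal cut_le)) // => k; rewrite /= -val_eqE.
Qed.
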